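(* Let $\phi\ge 0$, $\sigma>0$ with $\sigma\neq 1$, $\rho>0$, $m>0$ be constants with $\rho+m(\sigma-1)(\phi+1)>0$. Let $c(t)>0$, $s(t)>0$, $p(t)$, $t\ge 0$, satisfy $$p=c^{-\sigma}s^{\phi(1-\sigma)},\qquad \dot s=ms-c,\qquad \dot p=\Big(\rho-m-\phi\frac{c}{s}\Big)p ,$$ with $c(0)=c_0$, $s(0)=s_0$, together with the transversality condition $\lim_{t\to\infty}e^{-\rho t}p(t)s(t)=0$. Then necessarily $$\frac{c_0}{s_0}\,\sigma(\phi+1)=\rho+m(\sigma-1)(\phi+1),$$ and $$s(t)=s_0e^{\frac{m(\phi+1)-\rho}{\sigma(\phi+1)}t},\quad c(t)=c_0e^{\frac{m(\phi+1)-\rho}{\sigma(\phi+1)}t},\quad p(t)=c_0^{-\sigma}s_0^{\phi(1-\sigma)}e^{(\rho-m-\phi\frac{c_0}{s_0})t}.$$ In particular $s$ and $c$ grow at the common constant rate $\frac{m(\phi+1)-\rho}{\sigma(\phi+1)}$ and $p$ at the constant rate $\rho-m-\phi\frac{c_0}{s_0}$.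
   Context: This system is the set of first-order optimality conditions for the optimal growth problem with environmental asset: maximize $\int_0^\infty \frac{(cs^\phi)^{1-\sigma}}{1-\sigma}e^{-\rho t}dt$ subject to $\dot s=ms-c$, with $p$ the costate variable. *)

From Stdlib Require Import Reals Lra.
Open Scope R_scope.

Definition lim_at_infty (f : R -> R) (l : R) : Prop :=
  forall eps : R, eps > 0 -> exists T : R, forall t : R, t >= T -> Rabs (f t - l) < eps.

Definition right_continuous_at (f : R -> R) (x0 : R) : Prop :=
  forall eps : R, eps > 0 -> exists delta : R, delta > 0 /\
    forall t : R, x0 <= t < x0 + delta -> Rabs (f t - f x0) < eps.

(* Along the optimality system, p*c and s/c obey autonomous linear ODEs:
   p*c grows at the constant rate rho - k and s/c solves (s/c)' = k (s/c - A)
   with k = (rho + m(sigma-1)(phi+1))/sigma > 0 and A = (phi+1)/k.  Hence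
   s/c = A + g e^{kt}, and the discounted value e^{-rho t} p s
   = (p c)(s/c) e^{-rho t} tends to (p c)(0) g.  Transversality forces g = 0,
   so c = s/A from time 0 on; then s and p solve linear ODEs with constant
   coefficients and are pure exponentials. *)
From Stdlib Require Import Reals Lra.
Open Scope R_scope.

Lemma right_continuous_at_limit1_in (f : R -> R) (x0 : R) :
  right_continuous_at f x0 <-> limit1_in f (fun t => x0 < t) (f x0) x0.
Proof.
  unfold right_continuous_at, limit1_in, limit_in; simpl; unfold Rdist.
  split; intros H eps Heps; destruct (H eps Heps) as [d [Hd H']]; exists d; split; auto.
  - intros t [Ht Hd']. apply H'. split_Rabs; lra.
  - intros t Ht. destruct (Req_dec t x0) as [->|Hne].
    + rewrite Rminus_diag, Rabs_R0; lra.
    + apply H'. split; [lra|]. split_Rabs; lra.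
Qed.

Lemma right_continuous_at_mult (f g : R -> R) (x0 : R) :
  right_continuous_at f x0 -> right_continuous_at g x0 ->
  right_continuous_at (fun t => f t * g t) x0.
Proof.
  rewrite !right_continuous_at_limit1_in. apply limit_mul.
Qed.

Lemma right_continuous_at_minus (f g : R -> R) (x0 : R) :
  right_continuous_at f x0 -> right_continuous_at g x0 ->
  right_continuous_at (fun t => f t - g t) x0.
Proof.
  rewrite !right_continuous_at_limit1_in. apply limit_minus.
Qed.

Lemma right_continuous_at_const (a x0 : R) : right_continuous_at (fun _ => a) x0.
Proof.
  intros eps Heps. exists 1. split; [lra|]. intros. rewrite Rminus_diag, Rabs_R0; lra.
Qed.

Lemma right_continuous_at_comp (f g : R -> R) (x0 : R) :
  right_continuous_at f x0 -> continuity_pt g (f x0) ->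
  right_continuous_at (fun t => g (f t)) x0.
Proof.
  intros Hf Hg eps Heps.
  unfold continuity_pt, continue_in, limit1_in, limit_in in Hg; simpl in Hg; unfold Rdist in Hg.
  destruct (Hg eps Heps) as [a [Ha Hga]].
  destruct (Hf a Ha) as [d [Hd Hfd]].
  exists d; split; auto. intros t Ht.
  destruct (Req_dec (f t) (f x0)) as [E|E].
  - rewrite E, Rminus_diag, Rabs_R0; lra.
  - apply Hga. split; [split; [exact I | auto] | apply Hfd; auto].
Qed.

Lemma continuity_pt_right_continuous_at (g : R -> R) (x0 : R) :
  continuity_pt g x0 -> right_continuous_at g x0.
Proof.
  intro Hg. apply (right_continuous_at_comp (fun t => t) g); auto.
  intros eps Heps; exists eps; split; [lra|].
  intros t Ht. rewrite Rabs_right; lra.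
Qed.

Lemma right_continuous_at_eq (f g : R -> R) (x0 : R) :
  right_continuous_at f x0 -> right_continuous_at g x0 ->
  (forall t, x0 < t -> f t = g t) -> f x0 = g x0.
Proof.
  rewrite !right_continuous_at_limit1_in. intros Hf Hg E.
  assert (Hadh : adhDa (fun t => x0 < t) x0).
  { intros alp Halp. exists (x0 + alp / 2). split; [lra|].
    unfold Rdist. rewrite Rabs_right; lra. }
  assert (Hzero : limit1_in (fun t => f t - g t) (fun t => x0 < t) 0 x0).
  { intros eps Heps. exists 1. split; [lra|].
    intros t [Ht _]. simpl. unfold Rdist. rewrite E by auto.
    rewrite Rminus_diag, Rminus_diag, Rabs_R0; lra. }
  pose proof (single_limit _ _ _ _ _ Hadh (limit_minus _ _ _ _ _ _ Hf Hg) Hzero).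
  lra.
Qed.

(* Closes [derivable_pt_lim f t w] with [D : derivable_pt_lim f t v], leaving
   the goal [v = w] for [ring]/[field]. *)
Ltac derivative_from D :=
  unfold mult_fct, minus_fct, plus_fct, opp_fct, fct_cte, mult_real_fct, id in D;
  match goal with
  | |- derivable_pt_lim _ _ ?w =>
      match type of D with derivable_pt_lim _ _ ?v => replace w with v; [exact D |] end
  end.

Lemma derivable_exp_comp (f : R -> R) t d : derivable_pt_lim f t d ->
  derivable_pt_lim (fun u => exp (f u)) t (exp (f t) * d).
Proof.
  intro Df. apply (derivable_pt_lim_comp f exp); auto. apply derivable_pt_lim_exp.
Qed.

Lemma derivable_ln_pos (f : R -> R) t d : 0 < f t -> derivable_pt_lim f t d ->
  derivable_pt_lim (fun u => ln (f u)) t (d / f t).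
Proof.
  intros Hpos Df. replace (d / f t) with (/ f t * d) by (field; lra).
  apply (derivable_pt_lim_comp f ln); auto. apply derivable_pt_lim_ln; auto.
Qed.

Lemma null_derivative_constant_pos (f : R -> R) :
  (forall t, 0 < t -> derivable_pt_lim f t 0) -> forall t, 0 < t -> f t = f 1.
Proof.
  intros D t Ht.
  destruct (Rtotal_order t 1) as [L|[->|L]]; auto.
  - destruct (MVT_cor2 f (fun _ => 0) t 1 L) as [x [Hx _]];
      [intros x Hx; apply D; lra | lra].
  - destruct (MVT_cor2 f (fun _ => 0) 1 t L) as [x [Hx _]];
      [intros x Hx; apply D; lra | lra].
Qed.

Lemma affine_ode_solution_pos (f : R -> R) (k A : R) :
  (forall t, 0 < t -> derivable_pt_lim f t (k * (f t - A))) ->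
  exists g, forall t, 0 < t -> f t = A + g * exp (k * t).
Proof.
  intros Df.
  set (F := fun t => (f t - A) * exp (- k * t)).
  assert (DF : forall t, 0 < t -> derivable_pt_lim F t 0).
  { intros t Ht. unfold F.
    pose proof (derivable_pt_lim_mult _ _ t _ _
      (derivable_pt_lim_minus _ _ t _ _ (Df t Ht) (derivable_pt_lim_const A t))
      (derivable_exp_comp _ t _
        (derivable_pt_lim_scal _ (- k) t _ (derivable_pt_lim_id t)))) as D.
    derivative_from D. ring. }
  exists (F 1). intros t Ht.
  rewrite <- (null_derivative_constant_pos F DF t Ht). unfold F.
  rewrite Rmult_assoc, <- exp_plus.
  replace (- k * t + k * t) with 0 by ring. rewrite exp_0. ring.
Qed.

Lemma affine_ode_solution (f : R -> R) (k A : R) :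
  right_continuous_at f 0 ->
  (forall t, 0 < t -> derivable_pt_lim f t (k * (f t - A))) ->
  forall t, 0 <= t -> f t = A + (f 0 - A) * exp (k * t).
Proof.
  intros Hf Df.
  destruct (affine_ode_solution_pos f k A Df) as [g Hg].
  assert (Hf0 : f 0 = A + g).
  { rewrite (right_continuous_at_eq f (fun t => A + g * exp (k * t)) 0); auto.
    - rewrite Rmult_0_r, exp_0. ring.
    - apply continuity_pt_right_continuous_at. reg. }
  intros t Ht. destruct (Req_dec t 0) as [->|Hne].
  - rewrite Rmult_0_r, exp_0. ring.
  - rewrite Hg by lra. rewrite Hf0. ring.
Qed.

Lemma lim_at_infty_unique (f : R -> R) (l1 l2 : R) :
  lim_at_infty f l1 -> lim_at_infty f l2 -> l1 = l2.
Proof.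
  intros H1 H2. destruct (Req_dec l1 l2) as [|Hne]; auto.
  set (eps := Rabs (l1 - l2) / 2).
  assert (Heps : eps > 0) by (unfold eps; pose proof (Rabs_pos_lt (l1 - l2)); lra).
  destruct (H1 eps Heps) as [T1 HT1]. destruct (H2 eps Heps) as [T2 HT2].
  specialize (HT1 (Rmax T1 T2) (Rle_ge _ _ (Rmax_l _ _))).
  specialize (HT2 (Rmax T1 T2) (Rle_ge _ _ (Rmax_r _ _))).
  unfold eps in *. revert HT1 HT2. split_Rabs; lra.
Qed.

Lemma lim_at_infty_eventually_ext (f g : R -> R) (l T0 : R) :
  (forall t, t >= T0 -> f t = g t) -> lim_at_infty f l -> lim_at_infty g l.
Proof.
  intros E Hf eps Heps. destruct (Hf eps Heps) as [T HT].
  exists (Rmax T T0). intros t Ht.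
  rewrite <- E by (pose proof (Rmax_r T T0); lra).
  apply HT. pose proof (Rmax_l T T0); lra.
Qed.

Lemma lim_at_infty_exp_decay (L C k : R) :
  0 < k -> lim_at_infty (fun t => L + C * exp (- k * t)) L.
Proof.
  intros Hk eps Heps.
  exists (Rabs C / (k * eps)). intros t Ht.
  assert (HkT : k * eps * (Rabs C / (k * eps)) = Rabs C) by (field; lra).
  assert (HT : 0 <= Rabs C / (k * eps)).
  { apply (Rmult_le_reg_l (k * eps)); [nra|]. rewrite HkT, Rmult_0_r. apply Rabs_pos. }
  assert (Hbig : k * t < exp (k * t)).
  { destruct (Req_dec (k * t) 0) as [E|E].
    - rewrite E, exp_0; lra.
    - pose proof (exp_ineq1 _ E); lra. }
  assert (HC : Rabs C <= k * eps * t).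
  { rewrite <- HkT. apply Rmult_le_compat_l; nra. }
  pose proof (exp_pos (k * t)).
  replace (L + C * exp (- k * t) - L) with (C / exp (k * t))
    by (replace (- k * t) with (- (k * t)) by ring; rewrite exp_Ropp; field; lra).
  unfold Rdiv. rewrite Rabs_mult, Rabs_inv, (Rabs_right (exp _)) by lra.
  apply (Rmult_lt_reg_r (exp (k * t))); auto.
  rewrite Rmult_assoc, Rinv_l, Rmult_1_r by lra. nra.
Qed.

Section OptimalGrowth.

Variables phi sigma rho m : R.
Variables c s p : R -> R.

Hypothesis hphi : 0 <= phi.
Hypothesis hsigma : 0 < sigma.
Hypothesis hcond : rho + m * (sigma - 1) * (phi + 1) > 0.
Hypothesis hc_pos : forall t, 0 <= t -> 0 < c t.
Hypothesis hs_pos : forall t, 0 <= t -> 0 < s t.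
Hypothesis hp : forall t, 0 <= t ->
  p t = Rpower (c t) (- sigma) * Rpower (s t) (phi * (1 - sigma)).
Hypothesis hs_cont0 : right_continuous_at s 0.
Hypothesis hp_cont0 : right_continuous_at p 0.
Hypothesis hs_dot : forall t, 0 < t -> derivable_pt_lim s t (m * s t - c t).
Hypothesis hp_dot : forall t, 0 < t ->
  derivable_pt_lim p t ((rho - m - phi * (c t / s t)) * p t).
Hypothesis htrans : lim_at_infty (fun t => exp (- rho * t) * p t * s t) 0.

Let a := phi * (1 - sigma).
Let k := (rho + m * (sigma - 1) * (phi + 1)) / sigma.
Let A := (phi + 1) / k.

Lemma k_pos : 0 < k.
Proof. unfold k. apply Rdiv_lt_0_compat; lra. Qed.

Lemma A_pos : 0 < A.
Proof. unfold A. pose proof k_pos. apply Rdiv_lt_0_compat; lra. Qed.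

Lemma p_pos t : 0 <= t -> 0 < p t.
Proof.
  intro Ht. rewrite hp by auto. unfold Rpower.
  apply Rmult_lt_0_compat; apply exp_pos.
Qed.

(* c is only known to be positive, not differentiable; it is recovered from
   p and s through the constraint p = c^(-sigma) s^a. *)
Definition log_c t := (a * ln (s t) - ln (p t)) / sigma.

Lemma c_exp_log_c t : 0 <= t -> c t = exp (log_c t).
Proof.
  intro Ht. rewrite <- (exp_ln (c t)) by auto. f_equal.
  unfold log_c. rewrite hp by auto. unfold Rpower.
  rewrite ln_mult, !ln_exp by apply exp_pos. unfold a. field. lra.
Qed.

Lemma derivable_log_c t : 0 < t ->
  derivable_pt_lim log_c t ((a * (m - c t / s t) - (rho - m - phi * (c t / s t))) / sigma).
Proof.
  intro Ht.
  assert (Hs : 0 < s t) by (apply hs_pos; lra). assert (Hp : 0 < p t) by (apply p_pos; lra).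
  pose proof (derivable_pt_lim_mult _ _ t _ _
    (derivable_pt_lim_minus _ _ t _ _
      (derivable_pt_lim_scal _ a t _ (derivable_ln_pos s t _ Hs (hs_dot t Ht)))
      (derivable_ln_pos p t _ Hp (hp_dot t Ht)))
    (derivable_pt_lim_const (/ sigma) t)) as D.
  derivative_from D. field. lra.
Qed.

Lemma right_continuous_log_c : right_continuous_at log_c 0.
Proof.
  assert (Hln : forall f, right_continuous_at f 0 -> 0 < f 0 ->
             right_continuous_at (fun t => ln (f t)) 0).
  { intros f Hf Hpos. apply right_continuous_at_comp; auto.
    apply derivable_continuous_pt. exists (/ f 0). apply derivable_pt_lim_ln; auto. }
  apply right_continuous_at_mult; [| apply right_continuous_at_const].
  apply right_continuous_at_minus.
  - apply right_continuous_at_mult; [apply right_continuous_at_const |].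
    apply Hln; [exact hs_cont0 | apply hs_pos; lra].
  - apply Hln; [exact hp_cont0 | apply p_pos; lra].
Qed.

Definition p_times_c t := p t * exp (log_c t).

Definition s_over_c t := s t * exp (- log_c t).

Lemma p_times_c_ode t : 0 < t ->
  derivable_pt_lim p_times_c t ((rho - k) * (p_times_c t - 0)).
Proof.
  intro Ht. assert (0 < s t) by (apply hs_pos; lra).
  pose proof (derivable_pt_lim_mult _ _ t _ _
    (hp_dot t Ht) (derivable_exp_comp _ t _ (derivable_log_c t Ht))) as D.
  derivative_from D. unfold p_times_c, k, a. field. split; lra.
Qed.

Lemma s_over_c_ode t : 0 < t ->
  derivable_pt_lim s_over_c t (k * (s_over_c t - A)).
Proof.
  intro Ht. assert (0 < s t) by (apply hs_pos; lra).
  pose proof (derivable_pt_lim_mult _ _ t _ _ (hs_dot t Ht)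
    (derivable_exp_comp _ t _ (derivable_pt_lim_opp _ _ _ (derivable_log_c t Ht)))) as D.
  derivative_from D. unfold s_over_c.
  rewrite (c_exp_log_c t), exp_Ropp by lra.
  pose proof (exp_pos (log_c t)). pose proof k_pos.
  unfold A, k, a. field. repeat split; lra.
Qed.

Lemma p_times_c_solution t : 0 <= t ->
  p_times_c t = p_times_c 0 * exp ((rho - k) * t).
Proof.
  intro Ht. rewrite (affine_ode_solution p_times_c (rho - k) 0); auto.
  - ring.
  - apply right_continuous_at_mult; [exact hp_cont0 |].
    apply (right_continuous_at_comp log_c exp); [exact right_continuous_log_c | reg].
  - exact p_times_c_ode.
Qed.

Lemma s_over_c_solution t : 0 <= t ->
  s_over_c t = A + (s_over_c 0 - A) * exp (k * t).
Proof.
  intro Ht. apply affine_ode_solution; auto.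
  - apply right_continuous_at_mult; [exact hs_cont0 |].
    apply (right_continuous_at_comp log_c (fun x => exp (- x)));
      [exact right_continuous_log_c | reg].
  - exact s_over_c_ode.
Qed.

Lemma s_over_c_at_zero : s_over_c 0 = A.
Proof.
  set (pc0 := p_times_c 0). set (g := s_over_c 0 - A).
  assert (Hpc0 : 0 < pc0).
  { unfold pc0, p_times_c. apply Rmult_lt_0_compat; [apply p_pos; lra | apply exp_pos]. }
  assert (Hvalue : forall t, t >= 0 ->
            pc0 * g + pc0 * A * exp (- k * t) = exp (- rho * t) * p t * s t).
  { intros t Ht. rewrite (Rmult_assoc (exp _)).
    replace (p t * s t) with (p_times_c t * s_over_c t)
      by (unfold p_times_c, s_over_c; rewrite exp_Ropp;
          pose proof (exp_pos (log_c t)); field; lra).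
    rewrite p_times_c_solution, s_over_c_solution by lra. fold pc0 g.
    replace (- k * t) with (- rho * t + (rho - k) * t) by ring.
    rewrite exp_plus.
    replace (k * t) with (- (- rho * t + (rho - k) * t)) by ring.
    rewrite exp_Ropp, exp_plus.
    pose proof (exp_pos (- rho * t)). pose proof (exp_pos ((rho - k) * t)).
    field. lra. }
  assert (Hlim : lim_at_infty (fun t => exp (- rho * t) * p t * s t) (pc0 * g)).
  { apply (lim_at_infty_eventually_ext _ _ _ 0 Hvalue).
    apply lim_at_infty_exp_decay, k_pos. }
  pose proof (lim_at_infty_unique _ _ _ Hlim htrans) as Hzero.
  apply Rmult_integral in Hzero as [|]; unfold g in *; lra.
Qed.

Lemma c_proportional_s t : 0 <= t -> c t = s t / A.
Proof.
  intro Ht. pose proof (hc_pos t Ht). pose proof (hs_pos t Ht).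
  pose proof (s_over_c_solution t Ht) as Hratio. rewrite s_over_c_at_zero in Hratio.
  unfold s_over_c in Hratio. rewrite exp_Ropp, <- (c_exp_log_c t Ht) in Hratio.
  replace (A + (A - A) * exp (k * t)) with A in Hratio by ring.
  rewrite <- Hratio. field. lra.
Qed.

Lemma s_solution t : 0 <= t -> s t = s 0 * exp ((m - / A) * t).
Proof.
  intro Ht. rewrite (affine_ode_solution s (m - / A) 0 hs_cont0); auto.
  - ring.
  - intros u Hu. pose proof A_pos.
    replace ((m - / A) * (s u - 0)) with (m * s u - c u).
    + apply hs_dot; auto.
    + rewrite (c_proportional_s u) by lra. field. lra.
Qed.

Lemma p_solution t : 0 <= t -> p t = p 0 * exp ((rho - m - phi / A) * t).
Proof.
  intro Ht. rewrite (affine_ode_solution p (rho - m - phi / A) 0 hp_cont0); auto.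
  - ring.
  - intros u Hu. pose proof A_pos. pose proof (hs_pos u ltac:(lra)).
    replace ((rho - m - phi / A) * (p u - 0)) with ((rho - m - phi * (c u / s u)) * p u).
    + apply hp_dot; auto.
    + rewrite (c_proportional_s u) by lra. field. lra.
Qed.

Lemma optimal_path_closed_form :
  c 0 / s 0 * sigma * (phi + 1) = rho + m * (sigma - 1) * (phi + 1) /\
  (forall t, 0 <= t ->
     s t = s 0 * exp ((m * (phi + 1) - rho) / (sigma * (phi + 1)) * t) /\
     c t = c 0 * exp ((m * (phi + 1) - rho) / (sigma * (phi + 1)) * t) /\
     p t = Rpower (c 0) (- sigma) * Rpower (s 0) (phi * (1 - sigma))
           * exp ((rho - m - phi * (c 0 / s 0)) * t)).
Proof.
  pose proof k_pos. pose proof A_pos.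
  assert (Hs0 : 0 < s 0) by (apply hs_pos; lra).
  assert (Hc0 : c 0 = s 0 / A) by (apply c_proportional_s; lra).
  assert (Hrate : m - / A = (m * (phi + 1) - rho) / (sigma * (phi + 1))).
  { unfold A, k. field. repeat split; lra. }
  split.
  - rewrite Hc0. unfold A, k. field. repeat split; lra.
  - intros t Ht. rewrite <- Hrate. repeat split.
    + apply s_solution; auto.
    + rewrite c_proportional_s, s_solution, Hc0 by auto. field. lra.
    + rewrite p_solution, <- (hp 0), Hc0 by (auto; lra).
      do 3 f_equal. field. lra.
Qed.

End OptimalGrowth.

Theorem mainTheorem3 (phi sigma rho m c0 s0 : R) (c s p : R -> R)
  (hphi : 0 <= phi) (hsigma : 0 < sigma) (hsigma1 : sigma <> 1)
  (hrho : 0 < rho) (hm : 0 < m)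
  (hcond : rho + m * (sigma - 1) * (phi + 1) > 0)
  (hc_pos : forall t, 0 <= t -> 0 < c t)
  (hs_pos : forall t, 0 <= t -> 0 < s t)
  (hp : forall t, 0 <= t ->
     p t = Rpower (c t) (- sigma) * Rpower (s t) (phi * (1 - sigma)))
  (hs_cont0 : right_continuous_at s 0)
  (hp_cont0 : right_continuous_at p 0)
  (hs_dot : forall t, 0 < t -> derivable_pt_lim s t (m * s t - c t))
  (hp_dot : forall t, 0 < t ->
     derivable_pt_lim p t ((rho - m - phi * (c t / s t)) * p t))
  (hc0 : c 0 = c0) (hs0 : s 0 = s0)
  (htrans : lim_at_infty (fun t => exp (- rho * t) * p t * s t) 0) :
  c0 / s0 * sigma * (phi + 1) = rho + m * (sigma - 1) * (phi + 1) /\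
  (forall t, 0 <= t ->
     s t = s0 * exp ((m * (phi + 1) - rho) / (sigma * (phi + 1)) * t) /\
     c t = c0 * exp ((m * (phi + 1) - rho) / (sigma * (phi + 1)) * t) /\
     p t = Rpower c0 (- sigma) * Rpower s0 (phi * (1 - sigma))
           * exp ((rho - m - phi * (c0 / s0)) * t)).
Proof.
  subst c0 s0. apply optimal_path_closed_form; assumption.
Qed.
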